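(* Let $0<b<a<n$ and $0<\alpha<1$ with $\alpha n$ an integer. Let $\mathcal D_1$ be the law of $X_1-Y_1$ where $X_1\sim\mathrm{Binom}(\alpha n, a/n)$ and $Y_1\sim\mathrm{Binom}((1-\alpha)n, b/n)$ are independent, and let $\mathcal D_2$ be the law of $X_2-Y_2$ where $X_2\sim\mathrm{Binom}(\alpha n, b/n)$ and $Y_2\sim\mathrm{Binom}((1-\alpha)n, a/n)$ are independent. Let $C=(\sqrt a-\sqrt b)^2$ and $K=(1-2\alpha)n\,D(a/n,b/n)$. Then for every real $\theta$, \[ \max\Big(\Pr_{x\sim\mathcal D_1}[x+K\le\theta],\ \Pr_{x\sim\mathcal D_2}[x+K\ge-\theta]\Big)\le \exp\!\Big(-\frac C2+\frac\theta2\log R(a/n,b/n)\Big). \]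
   Context: $\mathrm{Binom}(m,p)$ denotes the binomial distribution with $m$ trials and success probability $p$. For $0<p,q<1$: $R(p,q)=\frac{p(1-q)}{q(1-p)}$, and for $p\neq q$, $D(p,q)=\dfrac{\log\frac{1-q}{1-p}}{\log R(p,q)}$. *)

From Stdlib Require Import Reals List.
Import ListNotations.
Open Scope R_scope.

Definition rsum (l : list nat) (f : nat -> R) : R :=
  fold_right Rplus 0 (map f l).

Definition binom_pmf (m : nat) (p : R) (k : nat) : R :=
  C m k * p ^ k * (1 - p) ^ (m - k).

(* Probability that X - Y satisfies the event ev, where X ~ Binom(m1,p1) and
   Y ~ Binom(m2,p2) are independent (joint pmf = product of marginals). *)
Definition diff_prob (m1 : nat) (p1 : R) (m2 : nat) (p2 : R)
  (ev : R -> bool) : R :=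
  rsum (seq 0 (S m1)) (fun i =>
    rsum (seq 0 (S m2)) (fun j =>
      binom_pmf m1 p1 i * binom_pmf m2 p2 j *
      (if ev (INR i - INR j) then 1 else 0))).

Definition Rle_b (x y : R) : bool := if Rle_dec x y then true else false.

Definition Rratio (p q : R) : R := p * (1 - q) / (q * (1 - p)).
Definition Dfun (p q : R) : R := ln ((1 - q) / (1 - p)) / ln (Rratio p q).

(** The bound is a Chernoff bound with the tilt e^λ = sqrt R(p, q), where p = a/n and
    q = b/n.  Under this tilt the binomial generating functions become
    1 - p + p e^{-λ} = S / y and 1 - q + q e^{λ} = S y, with y = sqrt ((1 - q)/(1 - p)) and
    S = sqrt (p q) + sqrt ((1 - p)(1 - q)) the Bhattacharyya coefficient.  The shift K is
    exactly the one for which the powers of y cancel, leaving e^{λθ} S^n, and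
    1 - S = ((√p - √q)^2 + (√(1-p) - √(1-q))^2) / 2 gives S^n <= exp (- n (√p - √q)^2 / 2). *)
From Stdlib Require Import Reals List Lra Lia.
Open Scope R_scope.

Lemma rsum_le l f g : (forall x, f x <= g x) -> rsum l f <= rsum l g.
Proof.
  intros Hfg; induction l as [|x l IH]; unfold rsum in *; simpl; [lra|].
  specialize (Hfg x); lra.
Qed.

Lemma rsum_ext l f g : (forall x, f x = g x) -> rsum l f = rsum l g.
Proof.
  intros Hfg; induction l as [|x l IH]; unfold rsum in *; simpl; [lra|].
  rewrite Hfg, IH; lra.
Qed.

Lemma rsum_scal_l l c f : rsum l (fun x => c * f x) = c * rsum l f.
Proof. induction l as [|x l IH]; unfold rsum in *; simpl; [lra|]. rewrite IH; lra. Qed.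

Lemma rsum_mul_rsum l1 l2 f g :
  rsum l1 (fun i => rsum l2 (fun j => f i * g j)) = rsum l1 f * rsum l2 g.
Proof.
  rewrite (Rmult_comm (rsum l1 f)), <- rsum_scal_l. apply rsum_ext; intros i.
  rewrite (Rmult_comm _ (f i)), <- rsum_scal_l. apply rsum_ext; intros j. ring.
Qed.

Lemma rsum_seq_sum_f_R0 f k m :
  rsum (seq k (S m)) f = sum_f_R0 (fun i => f (k + i)%nat) m.
Proof.
  revert k; induction m as [|m IH]; intros k.
  - unfold rsum; simpl. rewrite Nat.add_0_r; lra.
  - change (seq k (S (S m))) with (k :: seq (S k) (S m)).
    change (f k + rsum (seq (S k) (S m)) f = sum_f_R0 (fun i => f (k + i)%nat) (S m)).
    rewrite IH, (decomp_sum _ (S m)) by lia; simpl pred.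
    rewrite Nat.add_0_r. f_equal. apply sum_eq. intros i _. f_equal. lia.
Qed.

Lemma binom_pmf_ge0 m p k : 0 <= p <= 1 -> 0 <= binom_pmf m p k.
Proof.
  intros Hp. unfold binom_pmf, C.
  repeat apply Rmult_le_pos; try (apply pow_le; lra).
  - apply pos_INR.
  - left; apply Rinv_0_lt_compat, Rmult_lt_0_compat;
      apply lt_0_INR, Factorial.lt_O_fact.
Qed.

Lemma binom_pgf m p z :
  rsum (seq 0 (S m)) (fun k => binom_pmf m p k * z ^ k) = (1 - p + p * z) ^ m.
Proof.
  rewrite rsum_seq_sum_f_R0. replace (1 - p + p * z) with (p * z + (1 - p)) by ring.
  rewrite binomial. apply sum_eq. intros i _. unfold binom_pmf.
  rewrite Rpow_mult_distr. simpl. ring.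
Qed.

Lemma diff_prob_le_pgf m1 p1 m2 p2 (ev : R -> bool) c u v :
  0 <= p1 <= 1 -> 0 <= p2 <= 1 ->
  (forall i j : nat, (if ev (INR i - INR j) then 1 else 0) <= c * u ^ i * v ^ j) ->
  diff_prob m1 p1 m2 p2 ev <= c * (1 - p1 + p1 * u) ^ m1 * (1 - p2 + p2 * v) ^ m2.
Proof.
  intros Hp1 Hp2 Hev. unfold diff_prob.
  rewrite <- (binom_pgf m1 p1 u), <- (binom_pgf m2 p2 v), Rmult_assoc,
    <- rsum_mul_rsum, <- rsum_scal_l.
  apply rsum_le; intros i. rewrite <- rsum_scal_l. apply rsum_le; intros j.
  apply Rle_trans with (binom_pmf m1 p1 i * binom_pmf m2 p2 j * (c * u ^ i * v ^ j)).
  - apply Rmult_le_compat_l; [|apply Hev].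
    apply Rmult_le_pos; apply binom_pmf_ge0; assumption.
  - right; ring.
Qed.

Lemma exp_INR_mult k x : exp (INR k * x) = exp x ^ k.
Proof.
  induction k as [|k IH]; [simpl; rewrite Rmult_0_l, exp_0; lra|].
  rewrite S_INR, Rmult_plus_distr_r, exp_plus, IH, Rmult_1_l. simpl; ring.
Qed.

Lemma diff_prob_chernoff m1 p1 m2 p2 (ev : R -> bool) lam s :
  0 <= p1 <= 1 -> 0 <= p2 <= 1 ->
  (forall x, ev x = true -> lam * x <= s) ->
  diff_prob m1 p1 m2 p2 ev
  <= exp s * (1 - p1 + p1 * exp (- lam)) ^ m1 * (1 - p2 + p2 * exp lam) ^ m2.
Proof.
  intros Hp1 Hp2 Hev. apply diff_prob_le_pgf; [assumption|assumption|].
  intros i j. rewrite <- !exp_INR_mult, <- !exp_plus.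
  destruct (ev (INR i - INR j)) eqn:E; [|left; apply exp_pos].
  specialize (Hev _ E).
  eapply Rle_trans; [|apply exp_ineq1_le]. nra.
Qed.

Definition bhattacharyya (p q : R) : R := sqrt (p * q) + sqrt ((1 - p) * (1 - q)).

Lemma bhattacharyya_ge0 p q : 0 <= bhattacharyya p q.
Proof.
  unfold bhattacharyya.
  pose proof (sqrt_pos (p * q)); pose proof (sqrt_pos ((1 - p) * (1 - q))); lra.
Qed.

Lemma bhattacharyya_le_exp p q :
  0 <= p <= 1 -> 0 <= q <= 1 ->
  bhattacharyya p q <= exp (- (sqrt p - sqrt q) ^ 2 / 2).
Proof.
  intros Hp Hq. unfold bhattacharyya. rewrite !sqrt_mult by lra.
  pose proof (sqrt_sqrt p ltac:(lra)); pose proof (sqrt_sqrt q ltac:(lra)).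
  pose proof (sqrt_sqrt (1 - p) ltac:(lra)); pose proof (sqrt_sqrt (1 - q) ltac:(lra)).
  eapply Rle_trans; [|apply exp_ineq1_le].
  pose proof (pow2_ge_0 (sqrt (1 - p) - sqrt (1 - q))). nra.
Qed.

Lemma bhattacharyya_pow_le p q n :
  0 <= p <= 1 -> 0 <= q <= 1 ->
  bhattacharyya p q ^ n <= exp (- (INR n * (sqrt p - sqrt q) ^ 2) / 2).
Proof.
  intros Hp Hq.
  replace (- (INR n * (sqrt p - sqrt q) ^ 2) / 2)
    with (INR n * (- (sqrt p - sqrt q) ^ 2 / 2)) by field.
  rewrite exp_INR_mult. apply pow_incr.
  split; [apply bhattacharyya_ge0 | apply bhattacharyya_le_exp; assumption].
Qed.

Lemma sqr_sqrt_diff_scale c a b :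
  0 < c -> (sqrt a - sqrt b) ^ 2 = c * (sqrt (a / c) - sqrt (b / c)) ^ 2.
Proof.
  intros Hc. rewrite !sqrt_div_alt by exact Hc.
  pose proof (sqrt_lt_R0 c Hc) as Hsc.
  replace (sqrt a / sqrt c - sqrt b / sqrt c) with ((sqrt a - sqrt b) / sqrt c) by (field; lra).
  unfold Rdiv. rewrite Rpow_mult_distr, pow_inv, pow2_sqrt by lra.
  field. lra.
Qed.

Lemma pow_balance S y k l :
  y <> 0 -> y ^ k / y ^ l * (S / y) ^ k * (S * y) ^ l = S ^ (k + l).
Proof.
  intros Hy. unfold Rdiv. rewrite !Rpow_mult_distr, pow_inv, pow_add.
  field. split; apply pow_nonzero; exact Hy.
Qed.

Section Tilt.

Variables p q : R.
Hypotheses (Hq : 0 < q) (Hqp : q < p) (Hp : p < 1).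

Let w := sqrt (Rratio p q).
Let y := sqrt ((1 - q) / (1 - p)).

Lemma Rratio_gt1 : 1 < Rratio p q.
Proof.
  unfold Rratio.
  replace (p * (1 - q) / (q * (1 - p))) with (1 + (p - q) / (q * (1 - p))) by (field; lra).
  assert (0 < (p - q) / (q * (1 - p))); [|lra].
  apply Rdiv_lt_0_compat; [lra | apply Rmult_lt_0_compat; lra].
Qed.

Let w_gt1 : 1 < w.
Proof. rewrite <- sqrt_1. apply sqrt_lt_1_alt. pose proof Rratio_gt1. lra. Qed.

Let ln_w_gt0 : 0 < ln w.
Proof. rewrite <- ln_1. apply ln_increasing; lra. Qed.

Let y_gt0 : 0 < y.
Proof. apply sqrt_lt_R0, Rdiv_lt_0_compat; lra. Qed.

Let w_sqrt : w = sqrt p * sqrt (1 - q) / (sqrt q * sqrt (1 - p)).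
Proof.
  unfold w, Rratio. rewrite sqrt_div_alt by (apply Rmult_lt_0_compat; lra).
  rewrite !sqrt_mult by lra. reflexivity.
Qed.

Let y_sqrt : y = sqrt (1 - q) / sqrt (1 - p).
Proof. unfold y. apply sqrt_div_alt. lra. Qed.

Let bhattacharyya_sqrt :
  bhattacharyya p q = sqrt p * sqrt q + sqrt (1 - p) * sqrt (1 - q).
Proof. unfold bhattacharyya. rewrite !sqrt_mult by lra. reflexivity. Qed.

Lemma tilt_down : 1 - p + p * / w = bhattacharyya p q / y.
Proof.
  rewrite w_sqrt, y_sqrt, bhattacharyya_sqrt.
  pose proof (sqrt_sqrt p ltac:(lra)) as Ep; pose proof (sqrt_sqrt (1 - p) ltac:(lra)) as Ep'.
  pose proof (sqrt_lt_R0 p ltac:(lra)); pose proof (sqrt_lt_R0 q ltac:(lra)).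
  pose proof (sqrt_lt_R0 (1 - p) ltac:(lra)); pose proof (sqrt_lt_R0 (1 - q) ltac:(lra)).
  set (A := sqrt p) in *; set (A' := sqrt (1 - p)) in *.
  rewrite <- Ep', <- Ep. field. repeat split; lra.
Qed.

Lemma tilt_up : 1 - q + q * w = bhattacharyya p q * y.
Proof.
  rewrite w_sqrt, y_sqrt, bhattacharyya_sqrt.
  pose proof (sqrt_sqrt q ltac:(lra)) as Eq; pose proof (sqrt_sqrt (1 - q) ltac:(lra)) as Eq'.
  pose proof (sqrt_lt_R0 p ltac:(lra)); pose proof (sqrt_lt_R0 q ltac:(lra)).
  pose proof (sqrt_lt_R0 (1 - p) ltac:(lra)); pose proof (sqrt_lt_R0 (1 - q) ltac:(lra)).
  set (B := sqrt q) in *; set (B' := sqrt (1 - q)) in *.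
  rewrite <- Eq', <- Eq. field. repeat split; lra.
Qed.

Lemma ln_Rratio : ln (Rratio p q) = 2 * ln w.
Proof.
  pose proof Rratio_gt1.
  unfold w. rewrite <- (sqrt_sqrt (Rratio p q)) at 1 by lra.
  rewrite ln_mult by (apply sqrt_lt_R0; lra). ring.
Qed.

Lemma Dfun_tilt : Dfun p q = ln y / ln w.
Proof.
  assert (0 < (1 - q) / (1 - p)) by (apply Rdiv_lt_0_compat; lra).
  unfold Dfun. rewrite ln_Rratio.
  unfold y. rewrite <- (sqrt_sqrt ((1 - q) / (1 - p))) at 1 by lra.
  rewrite ln_mult by (apply sqrt_lt_R0; lra). field. lra.
Qed.

Variables m n : nat.
Hypothesis Hmn : (m <= n)%nat.

Let K := (INR n - 2 * INR m) * Dfun p q.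

Lemma exp_tilt_shift : exp (ln w * K) = y ^ (n - m) / y ^ m.
Proof.
  replace (ln w * K) with (INR (n - m) * ln y + - (INR m * ln y))
    by (unfold K; rewrite Dfun_tilt, minus_INR by exact Hmn; field; lra).
  rewrite exp_plus, exp_Ropp, <- !Rpower_pow by exact y_gt0. reflexivity.
Qed.

Lemma diff_prob_lower_tail_le theta :
  diff_prob m p (n - m) q (fun x => Rle_b (x + K) theta)
  <= exp (theta / 2 * ln (Rratio p q)) * bhattacharyya p q ^ n.
Proof.
  eapply Rle_trans.
  { apply (diff_prob_chernoff _ _ _ _ _ (ln w) (ln w * (theta - K))); [lra|lra|].
    intros x. unfold Rle_b. destruct (Rle_dec (x + K) theta); [|discriminate].
    intros _. apply Rmult_le_compat_l; lra. }
  rewrite exp_Ropp, exp_ln, tilt_down, tilt_up by lra.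
  replace (ln w * (theta - K)) with (ln w * theta + - (ln w * K)) by ring.
  rewrite exp_plus, exp_Ropp, exp_tilt_shift, ln_Rratio.
  replace (theta / 2 * (2 * ln w)) with (ln w * theta) by field.
  right. replace n with (m + (n - m))%nat at 3 by lia.
  rewrite <- (pow_balance (bhattacharyya p q) y m (n - m)) by lra.
  field. split; apply pow_nonzero; lra.
Qed.

Lemma diff_prob_upper_tail_le theta :
  diff_prob m q (n - m) p (fun x => Rle_b (- theta) (x + K))
  <= exp (theta / 2 * ln (Rratio p q)) * bhattacharyya p q ^ n.
Proof.
  eapply Rle_trans.
  { apply (diff_prob_chernoff _ _ _ _ _ (- ln w) (ln w * (theta + K))); [lra|lra|].
    intros x. unfold Rle_b. destruct (Rle_dec (- theta) (x + K)); [|discriminate].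
    intros _. rewrite Ropp_mult_distr_l_reverse.
    assert (0 <= ln w * (theta + K + x)) by (apply Rmult_le_pos; lra). lra. }
  rewrite Ropp_involutive, exp_Ropp, exp_ln, tilt_down, tilt_up by lra.
  rewrite Rmult_plus_distr_l, exp_plus, exp_tilt_shift, ln_Rratio.
  replace (theta / 2 * (2 * ln w)) with (ln w * theta) by field.
  right. replace n with (n - m + m)%nat at 3 by lia.
  rewrite <- (pow_balance (bhattacharyya p q) y (n - m) m) by lra.
  field. apply pow_nonzero; lra.
Qed.

End Tilt.

Theorem mainTheorem5 (n m : nat) (a b alpha theta : R)
  (hb : 0 < b) (hba : b < a) (han : a < INR n)
  (hal0 : 0 < alpha) (hal1 : alpha < 1) (hm : alpha * INR n = INR m) :
  let Cc := (sqrt a - sqrt b) ^ 2 in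
  let K := (1 - 2 * alpha) * INR n * Dfun (a / INR n) (b / INR n) in
  Rmax
    (diff_prob m (a / INR n) (n - m) (b / INR n)
       (fun x => Rle_b (x + K) theta))
    (diff_prob m (b / INR n) (n - m) (a / INR n)
       (fun x => Rle_b (- theta) (x + K)))
  <= exp (- Cc / 2 + theta / 2 * ln (Rratio (a / INR n) (b / INR n))).
Proof.
  intros Cc K.
  assert (Hn : 0 < INR n) by lra.
  assert (Hmn : (m <= n)%nat) by (apply INR_le; nra).
  set (p := a / INR n); set (q := b / INR n).
  assert (Hq : 0 < q) by (apply Rdiv_lt_0_compat; lra).
  assert (Hqp : q < p) by (apply Rmult_lt_compat_r; [apply Rinv_0_lt_compat|]; lra).
  assert (Hp : p < 1) by (apply (Rmult_lt_reg_r (INR n)); [lra|]; unfold p; field_simplify; lra).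
  assert (HK : K = (INR n - 2 * INR m) * Dfun p q) by (unfold K, p, q; rewrite <- hm; ring).
  assert (HC : Cc = INR n * (sqrt p - sqrt q) ^ 2) by (apply sqr_sqrt_diff_scale; lra).
  assert (Hbound : exp (theta / 2 * ln (Rratio p q)) * bhattacharyya p q ^ n
                   <= exp (- Cc / 2 + theta / 2 * ln (Rratio p q))).
  { rewrite HC, exp_plus, Rmult_comm. apply Rmult_le_compat_r; [left; apply exp_pos|].
    apply bhattacharyya_pow_le; lra. }
  rewrite HK. apply Rmax_lub; eapply Rle_trans; try exact Hbound.
  - apply diff_prob_lower_tail_le; assumption.
  - apply diff_prob_upper_tail_le; assumption.
Qed.
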